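(* Let $(\rho_n)$ be a sequence of positive functions on $\mathbb{R}^2$ such that there exist $r>0$ and $\sigma>0$ with $\int_{B_r(0)}\rho_n\,dx>\sigma$ for all $n\in\mathbb{N}$. Let $(u_n)$ be bounded in $L^2(\mathbb{R}^2)$ with $\sup_n B_1(\rho_n,u_n^2)<+\infty$. Then $\int_{\mathbb{R}^2}\log(1+|x|)u_n^2(x)\,dx$ is bounded in $n$. If moreover $B_1(\rho_n,u_n^2)\to0$ and $\|u_n\|_2\to0$, then $\int_{\mathbb{R}^2}\log(1+|x|)u_n^2(x)\,dx\to0$ as $n\to\infty$.
   Context: $B_1(f,g):=\iint_{\mathbb{R}^2\times\mathbb{R}^2}\log(1+|x-y|)f(x)g(y)\,dx\,dy$ for nonnegative measurable $f,g$; $B_r(x)$ is the ball of radius $r$ centered at $x$. *)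

From HB Require Import structures.
From mathcomp Require Import all_boot all_order all_algebra.
From mathcomp Require Import all_classical all_reals all_analysis.
Set Implicit Arguments. Unset Strict Implicit. Unset Printing Implicit Defensive.
Import Order.TTheory GRing.Theory Num.Theory.
Local Open Scope classical_set_scope.
Local Open Scope ring_scope.

(* R^2 is modelled as R * R with the product Lebesgue measure. *)
Definition leb2 (R : realType) :=
  ((@lebesgue_measure R) \x (@lebesgue_measure R))%E.
Arguments leb2 R : clear implicits.

Definition norm2 (R : realType) (x : R * R) : R :=
  Num.sqrt (x.1 ^+ 2 + x.2 ^+ 2).

Definition ball2 (R : realType) (c : R * R) (r : R) : set (R * R) :=
  [set x | norm2 (x.1 - c.1, x.2 - c.2) < r].

(* B_1(f,g) = \iint log(1+|x-y|) f(x) g(y) dx dy, for nonnegative f, g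
   (as an iterated integral in \bar R; equal to the product integral by Tonelli). *)
Definition B1 (R : realType) (f g : R * R -> R) : \bar R :=
  (\int[leb2 R]_x \int[leb2 R]_y
     (ln (1 + norm2 (x.1 - y.1, x.2 - y.2)) * f x * g y)%:E)%E.

(** For [x] in [B_r(0)] the triangle inequality gives
    [log(1+|y|) <= log(1+|x-y|) + log(1+r)].  Integrating against [g = u_n^2]
    bounds the log-moment of [g] by the logarithmic potential of [g] at [x] plus
    [log(1+r) |g|_1], for every [x] in the ball.  Averaging over [x] with the
    weight [rho_n], whose mass on the ball exceeds [sigma], yields
    [\int log(1+|y|) g <= B_1(rho_n, g) / sigma + log(1+r) |g|_1],
    from which both the bound and the convergence follow. *)

From HB Require Import structures.
From mathcomp Require Import all_boot all_order all_algebra.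
From mathcomp Require Import all_classical all_reals all_analysis.
From mathcomp Require Import measurable_realfun lra.
Import Order.TTheory GRing.Theory Num.Theory.
Local Open Scope classical_set_scope.
Local Open Scope ring_scope.

Section norm2.
Variable R : realType.
Implicit Types x y : R * R.

Lemma norm2_ge0 x : 0 <= norm2 x.
Proof. exact: sqrtr_ge0. Qed.

Lemma ln1p_norm2_ge0 x : 0 <= ln (1 + norm2 x).
Proof. by rewrite ln_ge0 // lerDl norm2_ge0. Qed.

Lemma norm2_distC x y :
  norm2 (x.1 - y.1, x.2 - y.2) = norm2 (y.1 - x.1, y.2 - x.2).
Proof.
by rewrite /norm2 /= -[(x.1 - y.1) ^+ 2]sqrrN -[(x.2 - y.2) ^+ 2]sqrrN !opprB.
Qed.

Lemma dot_le_norm2 x y : x.1 * y.1 + x.2 * y.2 <= norm2 x * norm2 y.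
Proof.
rewrite /norm2 -sqrtrM ?addr_ge0 ?sqr_ge0 //.
have [dot_le0|dot_gt0] := lerP (x.1 * y.1 + x.2 * y.2) 0.
  exact: le_trans dot_le0 (sqrtr_ge0 _).
rewrite -(ger0_norm (ltW dot_gt0)) -sqrtr_sqr.
rewrite ler_sqrt ?mulr_ge0 ?addr_ge0 ?sqr_ge0 //.
(* Lagrange's identity *)
have := sqr_ge0 (x.1 * y.2 - x.2 * y.1); nra.
Qed.

Lemma norm2_sqr x : norm2 x ^+ 2 = x.1 ^+ 2 + x.2 ^+ 2.
Proof. by rewrite sqr_sqrtr ?addr_ge0 ?sqr_ge0. Qed.

Lemma norm2_triangle x y : norm2 (x.1 + y.1, x.2 + y.2) <= norm2 x + norm2 y.
Proof.
rewrite -(ger0_norm (addr_ge0 (norm2_ge0 x) (norm2_ge0 y))) -sqrtr_sqr.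
rewrite ler_sqrt ?sqr_ge0 // (sqrrD (norm2 x)) !norm2_sqr mulr2n.
have := dot_le_norm2 x y; rewrite !sqrrD; lra.
Qed.

Lemma ln1p_norm2_le_shift r x y : ball2 (0, 0) r x ->
  ln (1 + norm2 y) <= ln (1 + norm2 (x.1 - y.1, x.2 - y.2)) + ln (1 + r).
Proof.
rewrite /ball2 /= !subr0 -surjective_pairing => xr.
have ny : norm2 y <= norm2 (x.1 - y.1, x.2 - y.2) + norm2 x.
  rewrite norm2_distC; have := norm2_triangle (y.1 - x.1, y.2 - x.2) x.
  by rewrite /= !subrK -surjective_pairing.
have := norm2_ge0 x; have := norm2_ge0 y.
have := norm2_ge0 (x.1 - y.1, x.2 - y.2).
move=> *; rewrite -lnM ?posrE ?ler_ln ?posrE; try lra; nra.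
Qed.

End norm2.

Section measurable_norm2.
Context (R : realType) d (T : measurableType d).
Variables (f g : T -> R).
Hypotheses (mf : measurable_fun setT f) (mg : measurable_fun setT g).

Lemma measurable_norm2 : measurable_fun setT (fun t => norm2 (f t, g t)).
Proof.
rewrite /norm2 /=; apply: measurableT_comp.
  exact: (continuous_measurable_fun (@sqrt_continuous R)).
by apply: measurable_funD; apply: measurable_funX.
Qed.

Lemma measurable_ln1p_norm2 :
  measurable_fun setT (fun t => ln (1 + norm2 (f t, g t))).
Proof.
apply: measurableT_comp; first exact: measurable_ln.
exact/measurable_funD/measurable_norm2.
Qed.

End measurable_norm2.

Lemma measurable_ball2 (R : realType) (c : R * R) (r : R) :
  measurable (ball2 c r).
Proof.
set dist := fun x : R * R => norm2 (x.1 - c.1, x.2 - c.2).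
have mdist : measurable_fun setT dist.
  by apply: measurable_norm2; apply: measurable_funB.
have -> : ball2 c r = setT `&` dist @^-1` `]-oo, r[.
  by apply/seteqP; split => x /=; rewrite in_itv //= => -[].

exact: mdist measurableT _ (measurable_itv _).
Qed.

(* The library's sigma-finiteness instance for product measures is not found
   by inference on [leb2], so it is established directly. *)
Lemma leb2_sigma_finite (R : realType) : sigma_finite setT (leb2 R).
Proof.
have /sigma_finiteP[F [FT ndF Ffin]] := sigma_finiteT (@lebesgue_measure R).
exists (fun n => F n `*` F n); last first.
  move=> n; have [mFn Fn_fin] := Ffin n; split; first exact: measurableX.
  by rewrite /leb2 product_measure1E // lte_mul_pinfty // ge0_fin_numE.
apply/seteqP; split=> [[x y] _|//].
have [i _ Fix] : (\bigcup_n F n) x by rewrite -FT.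
have [j _ Fjy] : (\bigcup_n F n) y by rewrite -FT.
exists (maxn i j) => //; split.
- by move: x Fix; exact/subsetPset/ndF/leq_maxl.
- by move: y Fjy; exact/subsetPset/ndF/leq_maxr.
Qed.

HB.instance Definition _ (R : realType) :=
  Measure.copy (leb2 R) ((@lebesgue_measure R) \x (@lebesgue_measure R))%E.
HB.instance Definition _ (R : realType) :=
  @Measure_isSigmaFinite.Build _ _ _ (leb2 R) (leb2_sigma_finite R).

Lemma integral_sqr_Lnorm2 d (T : measurableType d) (R : realType)
    (mu : {measure set T -> \bar R}) (f : T -> R) :
  (\int[mu]_x (f x ^+ 2)%:E = 'N[mu]_(2%:E) [EFin \o f] ^+ 2)%E.
Proof.
have I0 : (0 <= \int[mu]_x (`|f x| `^ 2)%R%:E)%E.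
  by apply: integral_ge0 => x _; rewrite lee_fin powR_ge0.
transitivity (\int[mu]_x (`|f x| `^ 2)%R%:E)%E.
  by apply: eq_integral => x _; rewrite powR_mulrn // real_normK // num_real.
by rewrite -[LHS](sqr_sqrte I0) unlock /= poweR12_sqrt.
Qed.

Lemma B1_ge0 (R : realType) (rh g : R * R -> R) :
  (forall x, 0 <= rh x) -> (forall y, 0 <= g y) -> (0 <= B1 rh g)%E.
Proof.
move=> rh0 g0; apply: integral_ge0 => x _; apply: integral_ge0 => y _.
by rewrite lee_fin !mulr_ge0 ?ln1p_norm2_ge0.
Qed.

Definition log_potential {R : realType} (g : R * R -> R) (x : R * R) : \bar R :=
  (\int[leb2 R]_y (ln (1 + norm2 (x.1 - y.1, x.2 - y.2)) * g y)%:E)%E.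

Section log_potential.
Context {R : realType} {g : R * R -> R}.
Local Open Scope ereal_scope.
Hypotheses (mg : measurable_fun setT g) (g0 : forall y, (0 <= g y)%R).

Lemma measurable_log_potential : measurable_fun setT (log_potential g).
Proof.
pose F (p : (R * R) * (R * R)) :=
  (ln (1 + norm2 (p.1.1 - p.2.1, p.1.2 - p.2.2)) * g p.2)%:E.
have mF : measurable_fun setT F.
  apply/measurable_EFinP/measurable_funM; last first.
    exact: measurableT_comp mg measurable_snd.
  apply: measurable_ln1p_norm2; apply: measurable_funB.
  - exact: measurableT_comp measurable_fst measurable_fst.
  - exact: measurableT_comp measurable_fst measurable_snd.
  - exact: measurableT_comp measurable_snd measurable_fst.
  - exact: measurableT_comp measurable_snd measurable_snd.
have F0 p : 0 <= F p by rewrite lee_fin mulr_ge0 ?ln1p_norm2_ge0.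
exact: (@measurable_fun_fubini_tonelli_F _ _ _ _ R (leb2 R) F mF F0).
Qed.

Lemma log_potential_ge0 x : 0 <= log_potential g x.
Proof.
by apply: integral_ge0 => y _; rewrite lee_fin mulr_ge0 ?ln1p_norm2_ge0.
Qed.

Lemma B1E (rh : R * R -> R) : (forall x, 0 <= rh x)%R ->
  B1 rh g = \int[leb2 R]_x ((rh x)%:E * log_potential g x).
Proof.
move=> rh0; apply: eq_integral => x _.
rewrite -ge0_integralZl_EFin //; last first.
- apply/measurable_EFinP/measurable_funM => //.
  by apply: measurable_ln1p_norm2; apply: measurable_funB.
- by move=> y _; rewrite lee_fin mulr_ge0 ?ln1p_norm2_ge0.
by apply: eq_integral => y _; rewrite -EFinM mulrCA mulrA.
Qed.

Lemma log_moment_le_log_potential (r : R) (x : R * R) : ball2 (0%R, 0%R) r x ->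
  \int[leb2 R]_y (ln (1 + norm2 y) * g y)%:E <=
  log_potential g x + (ln (1 + r))%:E * \int[leb2 R]_y (g y)%:E.
Proof.
move=> xB; set L := ln (1 + r).
have r_gt0 : (0 < r)%R by move: xB; apply: le_lt_trans; exact: norm2_ge0.
have L0 : (0 <= L)%R by rewrite ln_ge0 // lerDl ltW.
have mlog : measurable_fun setT
    (fun y : R * R => ln (1 + norm2 (x.1 - y.1, x.2 - y.2)))%R.
  by apply: measurable_ln1p_norm2; apply: measurable_funB.
have mlog0 : measurable_fun setT (fun y : R * R => ln (1 + norm2 y))%R.
  by rewrite (_ : (fun y => _) = fun y => ln (1 + norm2 (y.1, y.2)))%R;
    [exact: measurable_ln1p_norm2 | apply/funext => -[]].
apply: (@le_trans _ _ (\int[leb2 R]_y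
    ((ln (1 + norm2 (x.1 - y.1, x.2 - y.2)) * g y)%:E + L%:E * (g y)%:E))).
  apply: ge0_le_integral => //.
  - by move=> y _; rewrite lee_fin mulr_ge0 ?ln1p_norm2_ge0.
  - exact/measurable_EFinP/measurable_funM.
  - apply: emeasurable_funD; first exact/measurable_EFinP/measurable_funM.
    exact/emeasurable_funM/measurable_EFinP.
  - move=> y _; rewrite -EFinM -EFinD lee_fin -mulrDl ler_wpM2r //.
    exact: ln1p_norm2_le_shift.
rewrite ge0_integralD //.
- rewrite ge0_integralZl_EFin //; last exact/measurable_EFinP.
  by move=> y _; rewrite lee_fin.
- by move=> y _; rewrite lee_fin mulr_ge0 ?ln1p_norm2_ge0.
- exact/measurable_EFinP/measurable_funM.
- by move=> y _; rewrite -EFinM lee_fin mulr_ge0.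
- exact/emeasurable_funM/measurable_EFinP.
Qed.

Lemma log_moment_le_B1 (rh : R * R -> R) (r sigma : R) :
  measurable_fun setT rh -> (forall x, 0 <= rh x)%R ->
  (0 < r)%R -> (0 < sigma)%R ->
  sigma%:E < \int[leb2 R]_(x in ball2 (0%R, 0%R) r) (rh x)%:E ->
  \int[leb2 R]_y (ln (1 + norm2 y) * g y)%:E <=
  B1 rh g * (sigma^-1)%:E + (ln (1 + r))%:E * \int[leb2 R]_y (g y)%:E.
Proof.
move=> mrh rh0 r0 sigma0 mass.
set A := \int[leb2 R]_y _; set N := \int[leb2 R]_y _; set L := ln (1 + r).
have L0 : (0 < L)%R by rewrite ln_gt0 // ltrDl.
have B0 : 0 <= B1 rh g * (sigma^-1)%:E.
  by apply: mule_ge0; [exact: B1_ge0 | rewrite lee_fin invr_ge0 ltW].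
have N0 : 0 <= N by apply: integral_ge0 => y _; rewrite lee_fin.
have [Noo|Nfin] : N = +oo \/ N \is a fin_num.
  by move: N0; case: (N) => //; [right | left].
  rewrite Noo gt0_muley ?lte_fin // addey ?leey //.
  by rewrite gt_eqF // (lt_le_trans _ B0).
set c := A - L%:E * N.
have LNfin : L%:E * N \is a fin_num by rewrite fin_numM.
have [c_le0|c_gt0] := leP c 0.
  by rewrite -(leeBlDr _ _ LNfin); apply: le_trans c_le0 B0.
rewrite -(leeBlDr _ _ LNfin) lee_pdivlMr //.
have mrhE : measurable_fun setT (EFin \o rh) by exact/measurable_EFinP.
have mB := @measurable_ball2 R (0%R, 0%R) r.
have c_le x : ball2 (0%R, 0%R) r x -> c <= log_potential g x.
  by move=> xB; rewrite leeBlDr //; exact: log_moment_le_log_potential.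
rewrite -/c; apply: le_trans (lee_wpmul2l (ltW c_gt0) (ltW mass)) _.
rewrite muleC -ge0_integralZr //; first last.
- exact: ltW.
- by move=> x _; rewrite lee_fin.
- exact: measurable_funS mrhE.
apply: (@le_trans _ _ (\int[leb2 R]_(x in ball2 (0%R, 0%R) r)
                          ((rh x)%:E * log_potential g x))).
  apply: ge0_le_integral => //.
  - by move=> x _; rewrite mule_ge0 ?lee_fin // ltW.
  - by apply: emeasurable_funM => //; exact: measurable_funS mrhE.
  - apply: emeasurable_funM; first exact: measurable_funS mrhE.
    exact: measurable_funS measurableT _ measurable_log_potential.
  - by move=> x xB; apply: lee_wpmul2l; [rewrite lee_fin | exact: c_le].
rewrite B1E //; apply: ge0_subset_integral => //.
- by apply: emeasurable_funM => //; exact: measurable_log_potential.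
- by move=> x _; rewrite mule_ge0 ?lee_fin ?log_potential_ge0.
Qed.
End log_potential.

Theorem lemma3p1 (R : realType) (rho u : nat -> R * R -> R) :
  (forall n, measurable_fun setT (rho n)) ->
  (forall n x, 0 <= rho n x) ->
  (exists r sigma : R, 0 < r /\ 0 < sigma /\
     forall n, (sigma%:E < \int[leb2 R]_(x in ball2 (0%R, 0%R) r) (rho n x)%:E)%E) ->
  (forall n, measurable_fun setT (u n)) ->
  (exists C : R, forall n, ('N[leb2 R]_(2%:E) [EFin \o u n] <= C%:E)%E) ->
  (exists M : R, forall n, (B1 (rho n) (fun x => (u n x ^+ 2)%R) <= M%:E)%E) ->
  (exists K : R, forall n,
     ((\int[leb2 R]_x (ln (1 + norm2 x) * u n x ^+ 2)%R%:E) <= K%:E)%E)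
  /\
  ((fun n => B1 (rho n) (fun x => (u n x ^+ 2)%R)) @ \oo --> 0%E ->
   (fun n => ('N[leb2 R]_(2%:E) [EFin \o u n])%E) @ \oo --> 0%E ->
   (fun n => (\int[leb2 R]_x (ln (1 + norm2 x) * u n x ^+ 2)%R%:E)%E) @ \oo --> 0%E).
Proof.
move=> mrho rho0 [r [sigma [r0 [sigma0 mass]]]] mu [C normC] [M B1M].
set L := ln (1 + r).
have L0 : 0 <= L by rewrite ln_ge0 // lerDl ltW.
have log_moment_le n := log_moment_le_B1 (measurable_funX 2 (mu n))
  (fun x => sqr_ge0 (u n x)) (rho n) r sigma (mrho n) (rho0 n) r0 sigma0 (mass n).
split.
  exists (M / sigma + L * C ^+ 2) => n.
  apply: le_trans (log_moment_le n) _; rewrite EFinD !EFinM; apply: leeD.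
    by apply: lee_wpmul2r (B1M n); rewrite lee_fin invr_ge0 ltW.
  apply: lee_wpmul2l; first by rewrite lee_fin.
  by rewrite integral_sqr_Lnorm2; apply: lee_pmul; rewrite ?Lnorm_ge0 ?normC.
move=> B1_cvg0 Lnorm_cvg0.
apply: (@squeeze_cvge _ _ _ _ (cst 0%E) _ (fun n =>
    B1 (rho n) (fun x => (u n x ^+ 2)%R) * (sigma^-1)%:E +
    L%:E * \int[leb2 R]_x (u n x ^+ 2)%R%:E)%E); last first.
- rewrite -[0%E](adde0 0) -[X in (X + _)%E](mul0e (sigma^-1)%:E).
  rewrite -[X in (_ + X)%E](mule0 L%:E).
  apply: cvgeD => //; first exact: cvgeZr.
  apply: cvgeZl => //; under eq_fun do rewrite integral_sqr_Lnorm2.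
  by rewrite -[0%E](mule0 0); apply: cvgeM.
- exact: cvg_cst.
- apply: nearW => n; rewrite log_moment_le andbT.
  by apply: integral_ge0 => x _; rewrite lee_fin mulr_ge0 ?ln1p_norm2_ge0 ?sqr_ge0.
Qed.
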